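(* Let $s\in S$, $a\in A(s)$, $i\in P$ and $j\in\mathbb N_0$. If $\sum_{p=0}^{i'}\Delta_j(s,a,p)\le 0$ for all $i'\le i$, then $\sum_{p=0}^{i'}\Delta_{j'}(s,a,p)\le 0$ for all $j'\ge j$ and all $i'\le i$.
   Context: Let $(S,A,T,P,R,\Lambda)$ be an asymmetrically-discounted MDP: $S$ finite states, $A(s)$ the nonempty set of actions available at $s$, $p(s'\mid s,a)$ transition probabilities, principals $P=\{0,\dots,n-1\}$, rewards $R:S\times A\times P\to\mathbb Q$, and rational discount factors $\lambda_i\in(0,1)$ with $\lambda_0>\lambda_1>\dots>\lambda_{n-1}$. Define MDPs $\mathcal M_0=\mathcal M$ and, for $k=0,\dots,n-1$, let $V_k:S\to\mathbb R$ be the optimal discounted value function for principal $k$ (reward $R(\cdot,\cdot,k)$, discount $\lambda_k$) in $\mathcal M_k$, and let $\mathcal M_{k+1}$ be $\mathcal M_k$ restricted to actions used by some strategy optimal for principal $k$ in $\mathcal M_k$. For $s\in S$, $a\in A(s)$ and $i\in P$ define $\Delta_0(s,a,i)=R(s,a,i)+\lambda_i\sum_{s'\in S}p(s'\mid s,a)V_i(s')-V_i(s)$, and for $j\in\mathbb N_0$ define $\Delta_j(s,a,i)=\lambda_i^j\,\Delta_0(s,a,i)$. *)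

From HB Require Import structures.
From mathcomp Require Import all_boot all_order all_algebra.
From mathcomp Require Import boolp classical_sets reals topology normedtype sequences.
Set Implicit Arguments. Unset Strict Implicit. Unset Printing Implicit Defensive.
Import Order.TTheory GRing.Theory Num.Theory numFieldNormedType.Exports.
Local Open Scope ring_scope.
Local Open Scope classical_set_scope.

(* An asymmetrically-discounted MDP with finite state type S, finite action
   type Act (A s : {set Act} = actions available at s), transition
   probabilities trans s a s' = p(s'|s,a), principals 'I_n, rational rewards
   rew s a i and rational discount factors lam i. *)

Section MDP.
Context {R : realType} {S Act : finType}.
Variable trans : S -> Act -> S -> rat.

(* histories: list of past (state, action) pairs, most recent first *)
Definition hist := seq (S * Act).

Definition strategy := hist -> S -> Act -> R.

Definition valid_strategy (B : S -> set Act) (sigma : strategy) : Prop :=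
  forall h s,
    (forall a, 0 <= sigma h s a) /\
    (forall a, ~ B s a -> sigma h s a = 0) /\
    \sum_(a : Act) sigma h s a = 1.

Fixpoint fin_val (r : S -> Act -> rat) (l : rat) (sigma : strategy)
    (T : nat) (h : hist) (s : S) : R :=
  match T with
  | 0 => 0
  | T'.+1 => \sum_(a : Act) sigma h s a *
      (ratr (r s a) + ratr l *
         \sum_(s' : S) ratr (trans s a s') * fin_val r l sigma T' ((s, a) :: h) s')
  end.

Definition strat_value r l sigma (s : S) : R :=
  limn (fun T => fin_val r l sigma T [::] s).

Definition opt_value (B : S -> set Act) r l (s : S) : R :=
  sup [set x | exists sigma, valid_strategy B sigma /\ x = strat_value r l sigma s].

Definition optimal_strategy (B : S -> set Act) r l sigma : Prop :=
  valid_strategy B sigma /\ forall s, strat_value r l sigma s = opt_value B r l s.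

(* probability that history h followed by current state s occurs from s0 *)
Fixpoint hist_prob (sigma : strategy) (s0 : S) (h : hist) (s : S) : R :=
  match h with
  | [::] => (s == s0)%:R
  | (s', a) :: h' => hist_prob sigma s0 h' s' * sigma h' s' a * ratr (trans s' a s)
  end.

Definition used (B : S -> set Act) r l : S -> set Act :=
  fun s a => exists sigma, optimal_strategy B r l sigma /\
    exists s0 h, 0 < hist_prob sigma s0 h s /\ 0 < sigma h s a.

Variables (n : nat) (A : S -> {set Act}) (rew : S -> Act -> 'I_n -> rat)
          (lam : 'I_n -> rat).

Fixpoint allowed (k : nat) : S -> set Act :=
  match k with
  | 0 => fun s a => a \in A s
  | k'.+1 =>
      match (insub k' : option 'I_n) with
      | Some i => used (allowed k') (fun s a => rew s a i) (lam i)
      | None => allowed k'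
      end
  end.

Definition V (i : 'I_n) : S -> R :=
  opt_value (allowed i) (fun s a => rew s a i) (lam i).

Definition Delta0 (s : S) (a : Act) (i : 'I_n) : R :=
  ratr (rew s a i) + ratr (lam i) * \sum_(s' : S) ratr (trans s a s') * V i s'
  - V i s.

Definition Delta (j : nat) (s : S) (a : Act) (i : 'I_n) : R :=
  ratr (lam i) ^+ j * Delta0 s a i.

End MDP.

From HB Require Import structures.
From mathcomp Require Import all_boot all_order all_algebra.
From mathcomp Require Import boolp classical_sets reals.
Import Order.TTheory GRing.Theory Num.Theory.
Local Open Scope ring_scope.

(* Since Delta_{j'}(s,a,p) = lam_p^(j'-j) * Delta_j(s,a,p), the sums for j' are
   sums of the Delta_j(s,a,p) with weights lam_p^(j'-j), which are nonnegative
   and, as the discount factors decrease, nonincreasing in p.  By Abel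
   summation such a weighted sum is a nonnegative combination of the partial
   sums of the Delta_j(s,a,p), all of which are nonpositive. *)

Lemma big_ord_leqD1 (V : nmodType) {n : nat} (F : 'I_n -> V) (l : 'I_n) :
  \sum_(p : 'I_n | (p <= l)%N) F p = F l + \sum_(p : 'I_n | (p < l)%N) F p.
Proof.
rewrite (bigD1 l) //=; congr (_ + _); apply: eq_bigl => p.
by rewrite ltn_neqAle andbC -val_eqE.
Qed.

Section AbelSummation.

Variables (R : realDomainType) (n : nat) (d w : 'I_n -> R) (m : 'I_n).
Hypothesis partial_sum_le0 :
  forall k : 'I_n, (k <= m)%N -> \sum_(p : 'I_n | (p <= k)%N) d p <= 0.
Hypothesis weight_ge0 : forall k : 'I_n, (k <= m)%N -> 0 <= w k.
Hypothesis weight_noninc : forall k l : 'I_n, (k <= l <= m)%N -> w l <= w k.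

Lemma weighted_partial_sum_le (k : 'I_n) : (k <= m)%N ->
  \sum_(p : 'I_n | (p <= k)%N) w p * d p <= w k * \sum_(p : 'I_n | (p <= k)%N) d p.
Proof.
case: k => k; elim: k => [|k IH] ltkn lekm.
  by rewrite !big_ord_leqD1 !big_pred0 // !addr0.
set k' := Ordinal (ltnW ltkn).
have le_k'm : (k' <= m)%N by apply: ltnW.
have sum_lt (F : 'I_n -> R) :
    \sum_(p : 'I_n | (p < Ordinal ltkn)%N) F p = \sum_(p : 'I_n | (p <= k')%N) F p.
  by apply: eq_bigl => p; rewrite ltnS.
rewrite big_ord_leqD1 sum_lt (big_ord_leqD1 _ d) (sum_lt d) mulrDr lerD2l.
apply: le_trans (IH _ le_k'm) _.
apply: ler_wnM2r; first exact: partial_sum_le0.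
by apply: weight_noninc; rewrite leqnSn.
Qed.

Lemma abel_sum_le0 : \sum_(p : 'I_n | (p <= m)%N) w p * d p <= 0.
Proof.
apply: le_trans (weighted_partial_sum_le m (leqnn m)) _.
exact: mulr_ge0_le0 (weight_ge0 m (leqnn m)) (partial_sum_le0 m (leqnn m)).
Qed.

End AbelSummation.

Lemma DeltaD (R : realType) (S Act : finType) (n : nat)
    (trans : S -> Act -> S -> rat) (A : S -> {set Act})
    (rew : S -> Act -> 'I_n -> rat) (lam : 'I_n -> rat)
    (j k : nat) (s : S) (a : Act) (p : 'I_n) :
  Delta (R := R) trans A rew lam (j + k) s a p =
  ratr (lam p) ^+ k * Delta (R := R) trans A rew lam j s a p.
Proof. by rewrite /Delta addnC exprD mulrA. Qed.

Theorem lemma2 (R : realType) (S Act : finType) (n : nat)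
  (A : S -> {set Act}) (trans : S -> Act -> S -> rat)
  (rew : S -> Act -> 'I_n -> rat) (lam : 'I_n -> rat)
  (A_nonempty : forall s, A s != finset.set0)
  (trans_ge0 : forall s a s', a \in A s -> 0 <= trans s a s')
  (trans_sum1 : forall s a, a \in A s -> \sum_(s' : S) trans s a s' = 1)
  (lam_gt0 : forall i, 0 < lam i) (lam_lt1 : forall i, lam i < 1)
  (lam_decr : forall i i' : 'I_n, (i < i')%N -> lam i' < lam i)
  (s : S) (a : Act) (Ha : a \in A s) (i : 'I_n) (j : nat) :
  (forall i' : 'I_n, (i' <= i)%N ->
     \sum_(p : 'I_n | (p <= i')%N) Delta (R := R) trans A rew lam j s a p <= 0) ->
  forall (j' : nat), (j <= j')%N -> forall i' : 'I_n, (i' <= i)%N ->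
     \sum_(p : 'I_n | (p <= i')%N) Delta (R := R) trans A rew lam j' s a p <= 0.
Proof.
move=> Delta_j_le0 j' le_jj' i' le_i'i.
rewrite -(subnKC le_jj').
under eq_bigr => p _ do rewrite DeltaD.
have lam_ge0 (p : 'I_n) : (0 : R) <= ratr (lam p) by rewrite ler0q ltW.
apply: abel_sum_le0 => [k le_ki'|k _|k l /andP[le_kl _]].
- by apply: Delta_j_le0; apply: leq_trans le_i'i.
- exact: exprn_ge0.
- apply: lerXn2r; rewrite ?nnegrE //.
  move: le_kl; rewrite leq_eqVlt => /orP[/eqP/val_inj -> // | lt_kl].
  by rewrite ler_rat; apply/ltW/lam_decr.
Qed.
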